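(* Let $\mathcal N=(Q,\Sigma,\delta,I,F)$ be an NFA with $L=\mathcal L(\mathcal N)$. The following are equivalent: (a) $\mathsf G^r(\mathcal N)$ is the minimal DFA for $L$; (b) $\sim^r_{\mathcal N}=\sim^r_L$; (c) for all $u,v\in\Sigma^*$, $W^{\mathcal N}_{\mathrm{post}^{\mathcal N}_u(I),F}=W^{\mathcal N}_{\mathrm{post}^{\mathcal N}_v(I),F}\iff\mathrm{post}^{\mathcal N}_u(I)=\mathrm{post}^{\mathcal N}_v(I)$; (d) for all $q\in Q$, $P_{\sim^r_L}(W^{\mathcal N}_{I,q})=W^{\mathcal N}_{I,q}$; (e) $\mathcal N^R$ is atomic.
   Context: NFA $\mathcal N=(Q,\Sigma,\delta,I,F)$ with $\delta:Q\times\Sigma\to\wp(Q)$ extended to words by $\hat\delta$; $W^{\mathcal N}_{S,T}=\{w\mid\exists q\in S,q'\in T:q'\in\hat\delta(q,w)\}$ (singletons without braces); $\mathrm{post}^{\mathcal N}_w(S)=\{q\mid w\in W^{\mathcal N}_{S,q}\}$; $\mathcal L(\mathcal N)=W^{\mathcal N}_{I,F}$. Reverse $\mathcal N^R=(Q,\Sigma,\delta_r,F,I)$ with $q\in\delta_r(q',a)$ iff $q'\in\delta(q,a)$. $u\sim^r_L v\iff u^{-1}L=v^{-1}L$ with $u^{-1}L=\{x\mid ux\in L\}$; $u\sim^r_{\mathcal N}v\iff\mathrm{post}^{\mathcal N}_u(I)=\mathrm{post}^{\mathcal N}_v(I)$. For an equivalence $\sim$, $P_\sim(S)=\bigcup_{u\in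 S}\{v\mid u\sim v\}$. $\mathsf G^r(\mathcal N)$ is the DFA with states the classes of $\sim^r_{\mathcal N}$, initial state the class of $\varepsilon$, final states the classes of words of $L$, transition from the class of $u$ on $a$ to the class of $ua$ (isomorphic to the reachable subset construction $\mathcal N^D$). For a regular language $K$ with distinct left quotients $K_0,\dots,K_{n-1}$, an atom of $K$ is a nonempty intersection $\widetilde K_0\cap\dots\cap\widetilde K_{n-1}$ with $\widetilde K_i\in\{K_i,K_i^c\}$; an NFA is atomic if the right language $W_{q,F}$ of each of its states is a union of atoms of its language. The minimal DFA is the unique (up to isomorphism) complete DFA with fewest states for $L$. *)

From HB Require Import structures.
From mathcomp Require Import all_boot.
Set Implicit Arguments. Unset Strict Implicit. Unset Printing Implicit Defensive.

Definition lang (S : Type) := seq S -> Prop.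
Definition lang_eq (S : Type) (A B : lang S) := forall w, A w <-> B w.

Record nfa (Q S : finType) := NFA {
  ntrans : Q -> S -> {set Q};
  ninit : {set Q};
  nfinal : {set Q} }.

Section NFA.
Variables (Q S : finType).
Implicit Types (N : nfa Q S) (A B : {set Q}) (w u v : seq S).

Fixpoint dhat N (q : Q) w : {set Q} :=
  match w with
  | [::] => [set q]
  | a :: w' => \bigcup_(p in ntrans N q a) dhat N p w'
  end.

Definition W N A B : pred (seq S) :=
  fun w => [exists q in A, [exists q' in B, q' \in dhat N q w]].

Definition post N w A : {set Q} := [set q | W N A [set q] w].

Definition nlang N : lang S := fun w => W N (ninit N) (nfinal N) w.

Definition nrev N : nfa Q S :=
  NFA (fun q' a => [set q | q' \in ntrans N q a]) (nfinal N) (ninit N).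

Definition nfa_req N u v : Prop := post N u (ninit N) = post N v (ninit N).

End NFA.

Section Lang.
Variable (S : Type).
Implicit Types (L K : lang S) (u v : seq S).

Definition lang_req L u v : Prop := forall x, L (u ++ x) <-> L (v ++ x).

Definition Pclos (sim : seq S -> seq S -> Prop) (X : lang S) : lang S :=
  fun v => exists2 u, X u & sim u v.

(* An atom of K: a nonempty intersection, over all left quotients u^{-1}K,
   of either the quotient or its complement (a choice c u for each u;
   repeated quotients are harmless). *)
Definition is_atom K (A : lang S) : Prop :=
  (exists w, A w) /\
  exists c : seq S -> bool, forall w, A w <-> (forall u, K (u ++ w) <-> c u).

Definition union_of_atoms K (X : lang S) : Prop :=
  exists Atoms : lang S -> Prop,
    (forall A, Atoms A -> is_atom K A) /\
    (forall w, X w <-> exists2 A, Atoms A & A w).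

End Lang.

Definition atomic (Q S : finType) (N : nfa Q S) : Prop :=
  forall q : Q, union_of_atoms (nlang N) (fun w => W N [set q] (nfinal N) w).

Record dfa (S : finType) := DFA {
  dstate : finType;
  dinit : dstate;
  dtrans : dstate -> S -> dstate;
  dfinal : pred dstate }.

Definition dfa_lang (S : finType) (D : dfa S) : lang S :=
  fun w => @dfinal S D (foldl (@dtrans S D) (@dinit S D) w).

Definition minimal_dfa (S : finType) (D : dfa S) (L : lang S) : Prop :=
  lang_eq (dfa_lang D) L /\
  forall D' : dfa S, lang_eq (dfa_lang D') L -> #|dstate D| <= #|dstate D'|.

(* G^r(N): realised (up to isomorphism) as the reachable subset construction;
   the class of u is represented by post_u(I). *)
Section Gr.
Variables (Q S : finType) (N : nfa Q S).

Definition gr_step (A B : {set Q}) : bool := [exists a, B == post N [:: a] A].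
Definition gr_reach (A : {set Q}) : bool := connect gr_step (post N [::] (ninit N)) A.

Definition gr_state : finType := {A : {set Q} | gr_reach A}.

Lemma gr_reach_step (A : {set Q}) (a : S) :
  gr_reach A -> gr_reach (post N [:: a] A).
Proof.
move=> h; apply: connect_trans h (connect1 _).
by apply/existsP; exists a.
Qed.

Definition gr_init : gr_state := exist _ (post N [::] (ninit N)) (connect0 _ _).
Definition gr_trans (A : gr_state) (a : S) : gr_state :=
  exist _ (post N [:: a] (val A)) (gr_reach_step a (valP A)).
Definition gr_final : pred gr_state :=
  fun A => [exists q in val A, q \in nfinal N].

Definition Gr : dfa S := DFA gr_init gr_trans gr_final.
End Gr.

From Stdlib Require Import ClassicalEpsilon.
From mathcomp Require Import all_boot.
Set Implicit Arguments. Unset Strict Implicit. Unset Printing Implicit Defensive.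

(* Write P u for post_u(I) and L for the language of N.
   The relation ~^r_N always refines ~^r_L, since the right quotient
   u^{-1}L is the right language W_{P u, F} of the subset P u.  All five
   conditions turn out to be equivalent to the converse refinement
     (C)   u ~^r_L v  ->  P u = P v.
   (b) and (c) are (C) in disguise.  For (d) and (e) we use two general
   facts: a language X satisfies P_~(X) = X iff X is closed under ~, and X is
   a union of atoms of K iff X is closed under the "two-sided context"
   equivalence w ~ w' <-> (forall u, uw in K <-> uw' in K); for K = L^R this
   equivalence is ~^r_L read backwards, and the right language of q in N^R is
   the reversal of W_{I,q} = {u | q in P u}.  For (a) we prove the
   Myhill-Nerode style fact that an accessible DFA is minimal iff its states
   have pairwise distinct right languages (by quotienting a DFA by equality
   of right languages); the states of G^r(N) are the sets P u, with right
   languages W_{P u, F}. *)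

Definition decide (P : Prop) : bool :=
  if excluded_middle_informative P then true else false.

Lemma decideP (P : Prop) : reflect P (decide P).
Proof. by rewrite /decide; case: excluded_middle_informative => h; constructor. Qed.

Section DFARightLanguages.
Variables (S : finType) (D : dfa S).
Local Notation state := (dstate D).

Definition drun (s : state) (w : seq S) : state := foldl (@dtrans S D) s w.

Definition rlang (s : state) : lang S := fun w => dfinal (drun s w).

Definition accessible : Prop := forall s : state, exists w, drun (dinit D) w = s.

Lemma rlang_cat (s : state) (u w : seq S) : rlang s (u ++ w) = rlang (drun s u) w.
Proof. by rewrite /rlang /drun foldl_cat. Qed.

Definition requiv (s t : state) : bool := decide (lang_eq (rlang s) (rlang t)).

Lemma requivP (s t : state) : reflect (lang_eq (rlang s) (rlang t)) (requiv s t).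
Proof. exact: decideP. Qed.

Lemma requiv_refl (s : state) : requiv s s.
Proof. by apply/requivP. Qed.

Lemma requiv_sym (s t : state) : requiv s t -> requiv t s.
Proof. by move=> /requivP h; apply/requivP => w; rewrite h. Qed.

Lemma requiv_trans (s t r : state) : requiv s t -> requiv t r -> requiv s r.
Proof. by move=> /requivP h1 /requivP h2; apply/requivP => w; rewrite h1 h2. Qed.

Lemma requiv_trans_letter (s t : state) (a : S) :
  requiv s t -> requiv (dtrans s a) (dtrans t a).
Proof. by move=> /requivP h; apply/requivP => w; rewrite -!(rlang_cat _ [:: a]). Qed.

Definition rep (s : state) : state := odflt s [pick t | requiv t s].

Lemma rep_requiv (s : state) : requiv (rep s) s.
Proof. by rewrite /rep; case: pickP => [t ht|_] //=; apply: requiv_refl. Qed.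

Lemma rep_eq (s t : state) : requiv s t -> rep s = rep t.
Proof.
move=> hst; rewrite /rep (@eq_pick _ (requiv^~ s) (requiv^~ t)); last first.
  by move=> r; apply/idP/idP => h; [exact: requiv_trans h hst
                                    | exact: requiv_trans h (requiv_sym hst)].
by case: pickP => //= none; have := none t; rewrite requiv_refl.
Qed.

Lemma rep_idem (s : state) : rep (rep s) == rep s.
Proof. by apply/eqP/rep_eq/rep_requiv. Qed.

Definition qstate : finType := {s : state | rep s == s}.

Definition qtrans (X : qstate) (a : S) : qstate :=
  exist _ (rep (dtrans (val X) a)) (rep_idem _).

Definition qdfa : dfa S :=
  @DFA S qstate (exist _ (rep (dinit D)) (rep_idem _)) qtrans
       (fun X => dfinal (val X)).

Lemma qdfa_run (X : qstate) (s : state) (w : seq S) :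
  requiv (val X) s -> requiv (val (foldl qtrans X w)) (drun s w).
Proof.
elim: w X s => [|a w IH] X s //= hXs; apply: IH => /=.
exact: requiv_trans (rep_requiv _) (requiv_trans_letter a hXs).
Qed.

Lemma qdfa_lang : lang_eq (dfa_lang qdfa) (dfa_lang D).
Proof.
move=> w; have /requivP /(_ [::]) := @qdfa_run (dinit qdfa) (dinit D) w (rep_requiv _).
by rewrite /rlang /=.
Qed.

(* A minimal DFA cannot be shrunk by the quotient, so it has no two
   distinct states with the same right language. *)
Lemma minimal_rlang_inj (L : lang S) :
  minimal_dfa D L -> forall s t : state, lang_eq (rlang s) (rlang t) -> s = t.
Proof.
move=> [hD hmin] s t /requivP hst.
have hq : lang_eq (dfa_lang qdfa) L by move=> w; rewrite qdfa_lang.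
have onto := @inj_card_onto qstate state val val_inj (hmin _ hq).
have rep_id r : rep r = r by have /codomP [X ->] := onto r; exact: eqP (valP X).
by rewrite -(rep_id s) -(rep_id t); apply: rep_eq.
Qed.

(* Conversely, an accessible DFA with pairwise distinct right languages maps
   injectively into any DFA for the same language (send a state to where the
   other DFA goes on a word reaching it), hence it is minimal. *)
Lemma rlang_inj_minimal (L : lang S) :
  lang_eq (dfa_lang D) L -> accessible ->
  (forall s t : state, lang_eq (rlang s) (rlang t) -> s = t) -> minimal_dfa D L.
Proof.
move=> hD hacc hinj; split=> // D' hD'.
have reach s : exists w, drun (dinit D) w == s.
  by have [w hw] := hacc s; exists w; apply/eqP.
pose word (s : state) := xchoose (reach s).
have word_run s : drun (dinit D) (word s) = s by apply/eqP/(xchooseP (reach s)).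
pose f (s : state) := foldl (@dtrans S D') (dinit D') (word s).
suff: injective f by move/leq_card.
move=> s t hst; rewrite -(word_run s) -(word_run t); apply: hinj => w.
rewrite -!rlang_cat; have accept x : rlang (dinit D) x <-> L x := hD x.
by rewrite !accept -!hD' /dfa_lang !foldl_cat -/(f s) -/(f t) hst.
Qed.

End DFARightLanguages.

Section LanguageClosure.
Variable S : Type.
Implicit Types (X K : lang S) (u v w : seq S).

Definition closed_under (sim : seq S -> seq S -> Prop) X : Prop :=
  forall u v, sim u v -> X u -> X v.

Lemma Pclos_id_iff (sim : seq S -> seq S -> Prop) X :
  (forall u, sim u u) -> lang_eq (Pclos sim X) X <-> closed_under sim X.
Proof.
move=> sim_refl; split=> [hX u v huv Xu | hX w].
  by apply/hX; exists u.
by split=> [[u Xu /hX] | Xw]; [apply | exists w].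
Qed.

(* Two words are context-equivalent for K when they have the same left
   contexts in K; the atoms of K are exactly its classes. *)
Definition ctx_eq K w w' : Prop := forall u, K (u ++ w) <-> K (u ++ w').

Lemma ctx_eq_sym K w w' : ctx_eq K w w' -> ctx_eq K w' w.
Proof. by move=> h u; split=> /h. Qed.

Lemma atom_ctx_closed K A : is_atom K A -> closed_under (ctx_eq K) A.
Proof. by move=> [_ [c hc]] w w' hww' /hc Aw; apply/hc => u; rewrite -Aw hww'. Qed.

Lemma ctx_class_atom K w0 : is_atom K (ctx_eq K ^~ w0).
Proof.
split; first by exists w0.
by exists (fun u => decide (K (u ++ w0))) => w; split=> h u;
   rewrite h; split=> /decideP.
Qed.

Lemma union_of_atoms_iff K X : union_of_atoms K X <-> closed_under (ctx_eq K) X.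
Proof.
split=> [[Atoms [atoms hX]] w w' hww' /hX [A /[dup] inAtoms /atoms atomA Aw] | hX].
  by apply/hX; exists A => //; apply: atom_ctx_closed hww' Aw.
exists (fun A => exists2 w0, X w0 & lang_eq A (ctx_eq K ^~ w0)); split.
  by move=> A [w0 _ eA]; have [[w1 hw1] [c hc]] := ctx_class_atom K w0; split;
     [exists w1; apply/eA | exists c => w; rewrite eA].
move=> w; split=> [Xw | [A [w0 Xw0 eA] /eA hw]].
  by exists (ctx_eq K ^~ w) => //; exists w.
exact: hX (ctx_eq_sym hw) Xw0.
Qed.

End LanguageClosure.

Section NFAFacts.
Variables (Q S : finType) (N : nfa Q S).
Implicit Types (A B : {set Q}) (u v w : seq S).

Lemma mem_dhat_cat (q x : Q) u v :
  (x \in dhat N q (u ++ v)) = [exists p, (p \in dhat N q u) && (x \in dhat N p v)].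
Proof.
elim: u q => [|a u IH] q /=.
  apply/idP/existsP => [h|[p /andP[]]]; first by exists q; rewrite set11.
  by rewrite inE => /eqP ->.
apply/bigcupP/existsP => [[p hp]|[r /andP[/bigcupP[p hp hr] hx]]].
  rewrite IH => /existsP[r /andP[h1 h2]]; exists r; rewrite h2 andbT.
  by apply/bigcupP; exists p.
by exists p => //; rewrite IH; apply/existsP; exists r; rewrite hr.
Qed.

Lemma mem_post A w (q : Q) : (q \in post N w A) = [exists p in A, q \in dhat N p w].
Proof.
rewrite inE; apply/existsP/existsP => [[p /andP[hp /existsP[q' /andP[]]]]|[p /andP[hp h]]].
  by rewrite inE => /eqP -> h; exists p; rewrite hp.
by exists p; rewrite hp; apply/existsP; exists q; rewrite set11.
Qed.

Lemma W_post A B w : W N A B w = [exists q in post N w A, q \in B].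
Proof.
apply/existsP/existsP => [[p /andP[hp /existsP[q /andP[hq h]]]]|[q /andP[hq hB]]].
  by exists q; rewrite hq andbT mem_post; apply/existsP; exists p; rewrite hp.
move: hq; rewrite mem_post => /existsP[p /andP[hp h]].
by exists p; rewrite hp; apply/existsP; exists q; rewrite hB.
Qed.

Lemma post_nil A : post N [::] A = A.
Proof.
apply/setP => q; rewrite mem_post; apply/existsP/idP => [[p /andP[hp]]|h].
  by rewrite inE => /eqP ->.
by exists q; rewrite h set11.
Qed.

Lemma post_cat A u v : post N (u ++ v) A = post N v (post N u A).
Proof.
apply/setP => q; rewrite !mem_post.
apply/existsP/existsP => [[p /andP[hp]]|[r /andP[]]].
  rewrite mem_dhat_cat => /existsP[r /andP[h1 h2]].
  by exists r; rewrite h2 andbT mem_post; apply/existsP; exists p; rewrite hp.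
rewrite mem_post => /existsP[p /andP[hp h1]] h2.
by exists p; rewrite hp mem_dhat_cat; apply/existsP; exists r; rewrite h1.
Qed.

Lemma W_cat A B u v : W N A B (u ++ v) = W N (post N u A) B v.
Proof. by rewrite !W_post post_cat. Qed.

Lemma mem_dhat_rev (q q' : Q) w :
  (q' \in dhat (nrev N) q w) = (q \in dhat N q' (rev w)).
Proof.
elim: w q q' => [|a w IH] q q' /=; first by rewrite !inE eq_sym.
rewrite rev_cons -cats1 mem_dhat_cat.
apply/bigcupP/existsP => [[p hp]|[p /andP[h1 /bigcupP[r hr]]]].
  rewrite IH => h; exists p; rewrite h /=; move: hp; rewrite inE => hp.
  by apply/bigcupP; exists q => //; rewrite inE.
by rewrite inE => /eqP ->; exists p; rewrite ?inE // IH.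
Qed.

Lemma W_rev A B w : W (nrev N) A B w = W N B A (rev w).
Proof.
apply/existsP/existsP => [[p /andP[hp /existsP[q /andP[hq h]]]]|[q /andP[hq /existsP[p /andP[hp h]]]]].
  by exists q; rewrite hq; apply/existsP; exists p; rewrite hp -mem_dhat_rev.
by exists p; rewrite hp; apply/existsP; exists q; rewrite hq mem_dhat_rev.
Qed.

End NFAFacts.

Section SubsetAutomaton.
Variables (Q S : finType) (N : nfa Q S).
Implicit Types (w : seq S).
Local Notation grun := (@drun S (Gr N)).
Local Notation grlang := (@rlang S (Gr N)).

Lemma gr_run (A : gr_state N) w : val (grun A w) = post N w (val A).
Proof.
elim: w A => [|a w IH] A /=; first by rewrite post_nil.
by rewrite IH /= -post_cat.
Qed.

Lemma gr_init_run w : val (grun (gr_init N) w) = post N w (ninit N).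
Proof. by rewrite gr_run /= -post_cat. Qed.

Lemma gr_rlang (A : gr_state N) w : grlang A w = W N (val A) (nfinal N) w.
Proof. by rewrite W_post -gr_run. Qed.

Lemma gr_lang : lang_eq (dfa_lang (Gr N)) (nlang N).
Proof.
by move=> w; change (grlang (gr_init N) w <-> nlang N w); rewrite gr_rlang /= post_nil.
Qed.

Lemma gr_accessible : accessible (Gr N).
Proof.
move=> A; suff [u hu] : exists u, post N u (ninit N) = val A.
  by exists u; apply: val_inj; rewrite gr_init_run.
case: A => A /= /connectP [p reach_p ->].
elim: p [::] reach_p => [|B p IH] u /=; first by exists u.
move=> /andP[/existsP[a /eqP ->]]; rewrite -post_cat; exact: IH.
Qed.

End SubsetAutomaton.

Section Corollary.
Variables (Q S : finType) (N : nfa Q S).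
Implicit Types (u v w : seq S).
Local Notation P u := (post N u (ninit N)).
Local Notation L := (nlang N).
Local Notation F := (nfinal N).

(* The common core of (a)-(e): the ~^r_L-class of u determines post_u(I). *)
Definition nerode_determines_post : Prop := forall u v, lang_req L u v -> P u = P v.

Lemma lang_req_right_lang u v :
  lang_req L u v <-> lang_eq (fun w => W N (P u) F w) (fun w => W N (P v) F w).
Proof. by split=> h x; move: (h x); rewrite /nlang !W_cat. Qed.

Lemma lang_req_of_post u v : P u = P v -> lang_req L u v.
Proof. by move=> e; apply/lang_req_right_lang => x; rewrite e. Qed.

Lemma lang_req_sym u v : lang_req L u v -> lang_req L v u.
Proof. by move=> h x; split=> /(h x). Qed.

Lemma W_init_state (q : Q) u : W N (ninit N) [set q] u = (q \in P u).
Proof. by rewrite inE. Qed.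

Lemma nerode_determines_post_iff :
  (forall q : Q, closed_under (lang_req L) (fun u => W N (ninit N) [set q] u))
  <-> nerode_determines_post.
Proof.
split=> [closed u v huv | h q u v /h e]; last by rewrite !W_init_state e.
by apply/setP => q; apply/idP/idP; rewrite -!W_init_state;
   apply: closed => //; apply: lang_req_sym.
Qed.

Lemma ctx_eq_rev w w' :
  ctx_eq (nlang (nrev N)) w w' <-> lang_req L (rev w) (rev w').
Proof.
have rev_lang x y : nlang (nrev N) (x ++ y) = L (rev y ++ rev x).
  by rewrite /nlang W_rev rev_cat.
split=> h x; first by move: (h (rev x)); rewrite !rev_lang revK.
by rewrite !rev_lang; apply: h.
Qed.

Lemma cond_b :
  (forall u v, nfa_req N u v <-> lang_req L u v) <-> nerode_determines_post.
Proof. by split=> [h u v /h | h u v]; last split; [| exact: lang_req_of_post | exact: h]. Qed.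

Lemma cond_c :
  (forall u v, lang_eq (fun w => W N (P u) F w) (fun w => W N (P v) F w) <-> P u = P v)
  <-> nerode_determines_post.
Proof.
split=> [h u v /lang_req_right_lang /h // | h u v].
by rewrite -lang_req_right_lang; split=> [/h | /lang_req_of_post].
Qed.

Lemma cond_d :
  (forall q : Q, lang_eq (Pclos (lang_req L) (fun w => W N (ninit N) [set q] w))
                         (fun w => W N (ninit N) [set q] w))
  <-> nerode_determines_post.
Proof.
rewrite -nerode_determines_post_iff.
by split=> h q; have /(_ q) := h; rewrite Pclos_id_iff.
Qed.

(* The right language of q in N^R is the reversal of W_{I,q}; it is a union
   of atoms of L^R iff W_{I,q} is a union of ~^r_L-classes. *)
Lemma rev_right_lang_atomic (q : Q) :
  union_of_atoms (nlang (nrev N)) (fun w => W (nrev N) [set q] (nfinal (nrev N)) w)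
  <-> closed_under (lang_req L) (fun u => W N (ninit N) [set q] u).
Proof.
rewrite union_of_atoms_iff; split=> closed u v huv; last first.
  by rewrite /= !W_rev; apply: closed; apply/ctx_eq_rev.
have := closed (rev u) (rev v); rewrite /= !W_rev !revK; apply.
by apply/ctx_eq_rev; rewrite !revK.
Qed.

Lemma cond_e : atomic (nrev N) <-> nerode_determines_post.
Proof.
rewrite -nerode_determines_post_iff.
by split=> h q; [apply/rev_right_lang_atomic | apply/rev_right_lang_atomic].
Qed.

(* (a): the states post_u(I) of G^r(N) are reachable, so G^r(N) is minimal
   iff they have distinct right languages W_{post_u(I), F}. *)
Lemma cond_a : minimal_dfa (Gr N) L <-> nerode_determines_post.
Proof.
split=> [/minimal_rlang_inj inj u v huv | h].
  rewrite -!gr_init_run; congr val; apply: inj => w.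
  by rewrite !gr_rlang !gr_init_run; apply: (proj1 (lang_req_right_lang u v) huv).
have access := @gr_accessible _ _ N.
apply: (rlang_inj_minimal (gr_lang N) access) => A B.
have [u <-] := access A; have [v <-] := access B; move=> hAB.
apply: val_inj; rewrite !gr_init_run; apply: h; apply/lang_req_right_lang => w.
by move: (hAB w); rewrite !gr_rlang !gr_init_run.
Qed.

End Corollary.

Theorem corollary1 (Q S : finType) (N : nfa Q S) :
  [<-> minimal_dfa (Gr N) (nlang N);
       (forall u v : seq S, nfa_req N u v <-> lang_req (nlang N) u v);
       (forall u v : seq S,
          lang_eq (fun w => W N (post N u (ninit N)) (nfinal N) w)
                  (fun w => W N (post N v (ninit N)) (nfinal N) w)
          <-> post N u (ninit N) = post N v (ninit N));
       (forall q : Q,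
          lang_eq (Pclos (lang_req (nlang N)) (fun w => W N (ninit N) [set q] w))
                  (fun w => W N (ninit N) [set q] w));
       atomic (nrev N)].
Proof.
tfae.
- by move/cond_a/cond_b.
- by move/cond_b/cond_c.
- by move/cond_c/cond_d.
- by move/cond_d/cond_e.
- by move/cond_e/cond_a.
Qed.
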